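(* For every integer $n\geqslant 1$, let $G_n$ be the complete directed graph on $n$ vertices (vertex set $[n]$, with a directed edge $\overrightarrow{xy}$ for every ordered pair $x\neq y$). Then for all $k=0,1,\ldots,n-1$, $$h_k(\Delta(G_n))={n-1\choose k}(n-1)^k .$$
   Context: For a finite directed graph $D$ (no loops, no multiple edges), the complex of directed trees $\Delta(D)$ is the simplicial complex whose vertices are the directed edges of $D$ and whose faces are the sets of directed edges of $D$ forming a directed forest, i.e. a vertex-disjoint union of rooted directed trees (a rooted directed tree with root $r$ is an acyclic digraph in which every vertex is reached from $r$ by a unique directed path); equivalently, a set of edges in which every vertex has in-degree at most $1$ and there is no directed cycle. For a $d$-dimensional simplicial complex $\Delta$ with $f_i$ faces of dimension $i$ ($f_{-1}=1$), the $h$-vector $(h_0,\ldots,h_{d+1})$ is defined by $h_k=\sum_{i=0}^{k}(-1)^{k-i}{d+1-i\choose d+1-k}f_{i-1}$. The complex $\Delta(G_n)$ has dimension $n-2$. *)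

From mathcomp Require Import all_boot all_order all_algebra.
Set Implicit Arguments. Unset Strict Implicit. Unset Printing Implicit Defensive.
Import GRing.Theory Num.Theory.

Definition indeg_le1 (V : finType) (F : {set V * V}) : bool :=
  [forall y : V, #|[set x : V | (x, y) \in F]| <= 1].

Definition has_dcycle (V : finType) (F : {set V * V}) : bool :=
  [exists x : V, [exists y : V,
     ((x, y) \in F) && connect (fun a b => (a, b) \in F) y x]].

Definition directed_forest (V : finType) (F : {set V * V}) : bool :=
  indeg_le1 F && ~~ has_dcycle F.

(* The complex of directed trees Delta(D) of a digraph D given by adj:
   faces = sets of edges of D forming a directed forest. *)
Definition is_face (V : finType) (adj : rel V) (F : {set V * V}) : bool :=
  [forall e in F, adj e.1 e.2] && directed_forest F.

Definition complete_adj (n : nat) : rel 'I_n := fun x y => x != y.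

Definition faces_of (V : finType) (adj : rel V) : {set {set V * V}} :=
  [set F : {set V * V} | is_face adj F].

(* number of faces with i elements, i.e. f_{i-1} *)
Definition fcount (T : finType) (K : {set {set T}}) (i : nat) : nat :=
  #|[set F in K | #|F| == i]|.

(* d+1 where d is the dimension: maximal face cardinality *)
Definition dim1 (T : finType) (K : {set {set T}}) : nat :=
  \max_(F in K) #|F|.

Definition hvec (T : finType) (K : {set {set T}}) (k : nat) : int :=
  \sum_(0 <= i < k.+1)
     ((-1) ^+ (k - i) * ('C(dim1 K - i, dim1 K - k))%:Z * (fcount K i)%:Z)%R.

From mathcomp Require Import all_boot all_order all_algebra.
From mathcomp Require Import ring.
Import GRing.Theory Num.Theory.
Set Implicit Arguments. Unset Strict Implicit. Unset Printing Implicit Defensive.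

(* An edge x -> y extends a directed forest with i edges on n vertices exactly
   when y is one of its n - i roots and x lies outside the tree of y; since the
   trees partition the vertices, there are n (n - i - 1) such edges.  Double
   counting pairs (forest, edge) then gives f_(i-1) = C(n-1, i) n^i.  With
   m = n - 1 and C(m-i, m-k) C(m, i) = C(m, k) C(k, i), the defining sum of h_k
   becomes C(m, k) ((m + 1) - 1)^k by the binomial theorem. *)

Lemma card_pairs (T1 T2 : finType) (P : pred T1) (Q : T1 -> pred T2) :
  #|[set p : T1 * T2 | P p.1 && Q p.1 p.2]| = \sum_(a | P a) #|[set b | Q a b]|.
Proof.
rewrite -sum1dep_card -(pair_big_dep P Q (fun _ _ => 1)).
by apply: eq_bigr => a _; rewrite sum1dep_card.
Qed.

Section DirectedForests.
Variable V : finType.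
Implicit Types (G F : {set V * V}) (u v x y : V).

Definition edge_rel G : rel V := fun x y => (x, y) \in G.
Definition is_root G y : bool := [forall x, (x, y) \notin G].
Definition ancestors G v : {set V} := [set u | connect (edge_rel G) u v].

Lemma directed_forestP G :
  reflect ((forall x1 x2 y, (x1, y) \in G -> (x2, y) \in G -> x1 = x2) /\
           (forall x y, (x, y) \in G -> ~~ connect (edge_rel G) y x))
          (directed_forest G).
Proof.
apply: (iffP andP) => [[/forallP indeg acyc] | [uniq_parent acyc]]; split.
- by move=> x1 x2 y h1 h2; apply: (card_le1_eqP (indeg y)); rewrite inE.
- move=> x y hxy; apply: contra acyc => c.
  by apply/existsP; exists x; apply/existsP; exists y; rewrite hxy.
- apply/forallP=> y; apply/card_le1_eqP=> a b; rewrite !inE => ha hb.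
  exact: uniq_parent hb ha.
- apply/existsP=> -[x /existsP [y /andP [hxy c]]].
  by move: (acyc _ _ hxy); rewrite c.
Qed.

Lemma forest_parent_uniq G x1 x2 y : directed_forest G ->
  (x1, y) \in G -> (x2, y) \in G -> x1 = x2.
Proof. by case/directed_forestP=> uniq_parent _; apply: uniq_parent. Qed.

Lemma forest_acyclic G x y : directed_forest G ->
  (x, y) \in G -> ~~ connect (edge_rel G) y x.
Proof. by case/directed_forestP=> _; apply. Qed.

Lemma connect_subset G F u w : G \subset F ->
  connect (edge_rel G) u w -> connect (edge_rel F) u w.
Proof.
move=> /subsetP sGF; apply: connect_sub => a b hab.
exact/connect1/sGF.
Qed.

Lemma sub_forest G F : G \subset F -> directed_forest F -> directed_forest G.
Proof.
move=> sGF hF; have /subsetP sGF' := sGF; apply/directed_forestP; split.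
  by move=> x1 x2 y h1 h2; apply: (forest_parent_uniq hF (sGF' _ h1) (sGF' _ h2)).
move=> x y hxy; apply: contra (forest_acyclic hF (sGF' _ hxy)).
exact: connect_subset.
Qed.

Lemma connect_last_edge G u v : connect (edge_rel G) u v -> u != v ->
  exists2 q, (q, v) \in G & connect (edge_rel G) u q.
Proof.
case/connectP=> s; elim/last_ind: s => [|s q _] /=; first by move=> _ ->; rewrite eqxx.
rewrite rcons_path last_rcons => /andP [us qv] -> _.
by exists (last u s) => //; apply/connectP; exists s.
Qed.

Lemma card_ancestors_lt G p v : directed_forest G ->
  (p, v) \in G -> #|ancestors G p| < #|ancestors G v|.
Proof.
move=> hF hpv; apply/proper_card/properP; split.
  apply/subsetP=> u; rewrite !inE => c.
  exact: connect_trans c (connect1 _).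
by exists v; rewrite inE ?connect0 ?forest_acyclic.
Qed.

Lemma forest_ind G : directed_forest G -> forall P : V -> Prop,
  (forall v, (forall p, (p, v) \in G -> P p) -> P v) -> forall v, P v.
Proof.
move=> hF P IH v; have [m] := ubnP #|ancestors G v|.
elim: m v => // m IHm v lt_vm; apply: IH => p hpv.
exact/IHm/(leq_trans (card_ancestors_lt hF hpv)).
Qed.

Lemma root_exists G v : directed_forest G ->
  exists2 r, is_root G r & connect (edge_rel G) r v.
Proof.
move=> hF; elim/(forest_ind hF): v => v IH.
have [rv | /forallPn [p]] := boolP (is_root G v); first by exists v.
rewrite negbK => hpv; have [r hr c] := IH p hpv.
by exists r => //; apply: connect_trans c (connect1 _).
Qed.

Lemma root_unique G v r1 r2 : directed_forest G -> is_root G r1 -> is_root G r2 ->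
  connect (edge_rel G) r1 v -> connect (edge_rel G) r2 v -> r1 = r2.
Proof.
move=> hF; elim/(forest_ind hF): v r1 r2 => v IH r1 r2 h1 h2 c1 c2.
have [rv | nrv] := boolP (is_root G v).
  suff root_eq r : is_root G r -> connect (edge_rel G) r v -> r = v.
    by rewrite (root_eq r1 h1 c1) (root_eq r2 h2 c2).
  move=> hr c; apply/eqP; apply: contraLR rv => /(connect_last_edge c) [q hq _].
  by apply/forallPn; exists q; rewrite negbK.
have parent r : is_root G r -> connect (edge_rel G) r v ->
    exists2 q, (q, v) \in G & connect (edge_rel G) r q.
  by move=> hr c; apply: connect_last_edge c _; apply: contraNneq nrv => <-.
have [q1 hq1 d1] := parent _ h1 c1; have [q2 hq2 d2] := parent _ h2 c2.
rewrite (forest_parent_uniq hF hq1 hq2) in d1.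
exact: IH hq2 _ _ h1 h2 d1 d2.
Qed.

Lemma card_roots G : directed_forest G -> #|[set y | is_root G y]| = #|V| - #|G|.
Proof.
move=> hF.
have -> : [set y | is_root G y] = ~: [set e.2 | e in G].
  apply/setP=> y; rewrite !inE; apply/forallP/idP => [noin | nimg a].
    by apply/imsetP => -[[a b] hab /= eb]; subst b; move: (noin a); rewrite hab.
  by apply: contra nimg => hay; apply/imsetP; exists (a, y).
rewrite cardsCs setCK card_in_imset // => -[a b] [c d] hab hcd /= ebd.
by subst d; rewrite (forest_parent_uniq hF hab hcd).
Qed.

Lemma connect_setU1 G x y u w : connect (edge_rel ((x, y) |: G)) u w ->
  connect (edge_rel G) u w \/ connect (edge_rel G) u x /\ connect (edge_rel G) y w.
Proof.
case/connectP=> s; elim: s u => [|c s IH] u /=; first by move=> _ ->; left.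
case/andP=> /setU1P [[-> ->] | uc] cs ew.
  by right; split=> //; case: (IH _ cs ew) => [|[]].
have cuc : connect (edge_rel G) u c by apply: connect1.
case: (IH _ cs ew) => [cw | [cx yw]]; first by left; apply: connect_trans cuc cw.
by right; split=> //; apply: connect_trans cuc cx.
Qed.

Lemma forest_setU1 G x y : directed_forest G ->
  ((x, y) \notin G) && directed_forest ((x, y) |: G) =
  is_root G y && ~~ connect (edge_rel G) y x.
Proof.
move=> hF; apply/idP/idP => [/andP [xyG hF'] | /andP [ry nyx]].
  apply/andP; split.
    apply/forallP=> z; apply: contra xyG => zyG.
    by rewrite (forest_parent_uniq hF' (setU11 _ _) (setU1r _ zyG)).
  apply: contra (forest_acyclic hF' (setU11 _ _)).
  exact: connect_subset (subsetUr _ _).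
move/forallP: (ry) => no_parent; rewrite no_parent /=.
apply/directed_forestP; split.
  move=> x1 x2 z /setU1P [[e1 ez] | h1] /setU1P [[e2 ez'] | h2].
  - by rewrite e1 e2.
  - by move: (no_parent x2); rewrite -ez h2.
  - by move: (no_parent x1); rewrite -ez' h1.
  - exact: forest_parent_uniq hF h1 h2.
move=> a b /setU1P [[-> ->] | abG].
  by apply/negP => /connect_setU1 [c | [c _]]; rewrite c in nyx.
apply/negP => /connect_setU1 [c | [bx ya]].
  by move: (forest_acyclic hF abG); rewrite c.
by case/negP: nyx; apply: connect_trans ya (connect_trans (connect1 abG) bx).
Qed.

Lemma card_forest_extensions G : directed_forest G ->
  #|[set e | (e \notin G) && directed_forest (e |: G)]| = #|V| * (#|V| - #|G| - 1).
Proof.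
move=> hF.
pose tree_pairs := [set e : V * V | is_root G e.2 && connect (edge_rel G) e.2 e.1].
have -> : [set e | (e \notin G) && directed_forest (e |: G)] =
    setX setT [set y | is_root G y] :\: tree_pairs.
  by apply/setP => -[x y]; rewrite !inE /= forest_setU1 //; case: is_root; rewrite /= ?andbT.
have card_tree_pairs : #|tree_pairs| = #|V|.
  rewrite -(@card_in_imset _ _ fst) => [|[x1 y1] [x2 y2]]; last first.
    rewrite !inE /= => /andP [r1 c1] /andP [r2 c2] ex; subst x2.
    by rewrite (root_unique hF r1 r2 c1 c2).
  rewrite -cardsT; apply: eq_card => x; rewrite inE.
  have [r hr c] := root_exists x hF.
  by apply/imsetP; exists (x, r); rewrite // inE hr c.
rewrite cardsD (setIidPr _) ?cardsX ?cardsT ?card_roots ?card_tree_pairs //.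
  by rewrite [RHS]mulnBr muln1.
by apply/subsetP => -[x y]; rewrite !inE /= => /andP [-> _].
Qed.

Definition nforests i : nat := #|[set F : {set V * V} | directed_forest F & #|F| == i]|.

Lemma nforests0 : nforests 0 = 1.
Proof.
apply/eqP/cards1P; exists set0; apply/setP => F; rewrite !inE cards_eq0.
apply/andP/eqP => [[_ /eqP //] | ->]; split=> //.
by apply/directed_forestP; split=> [x1 x2 y|x y]; rewrite inE.
Qed.

Lemma nforests_rec i : nforests i.+1 * i.+1 = nforests i * (#|V| * (#|V| - i - 1)).
Proof.
pose removable := [set p : {set V * V} * (V * V) |
  (directed_forest p.1 && (#|p.1| == i.+1)) && (p.2 \in p.1)].
pose addable := [set p : {set V * V} * (V * V) |
  (directed_forest p.1 && (#|p.1| == i)) &&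
  ((p.2 \notin p.1) && directed_forest (p.2 |: p.1))].
have card_removable : #|removable| = nforests i.+1 * i.+1.
  rewrite (card_pairs (fun F => directed_forest F && (#|F| == i.+1)) (fun F e => e \in F)).
  rewrite -sum_nat_cond_const; apply: eq_bigr => F /andP [_ /eqP <-].
  by apply: eq_card => e; rewrite inE.
have card_addable : #|addable| = nforests i * (#|V| * (#|V| - i - 1)).
  rewrite (card_pairs (fun F => directed_forest F && (#|F| == i))
    (fun F e => (e \notin F) && directed_forest (e |: F))).
  rewrite -sum_nat_cond_const; apply: eq_bigr => F /andP [hF /eqP <-].
  exact: card_forest_extensions.
rewrite -card_removable -card_addable.
have -> : addable = [set (p.1 :\ p.2, p.2) | p in removable].
  apply/setP => -[F e]; rewrite inE /=; apply/idP/imsetP.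
    case/andP=> /andP [hF /eqP cF] /andP [eF hF'].
    exists (e |: F, e); last by rewrite /= setU1K.
    by rewrite inE /= hF' setU11 cardsU1 eF cF eqxx.
  case=> -[F' e'] + [-> ->] /=; rewrite inE /= => /andP [/andP [hF' /eqP cF'] e'F'].
  rewrite setD1K // hF' (sub_forest (subD1set F' e') hF') !inE eqxx /= andbT.
  by move: cF'; rewrite (cardsD1 e') e'F' add1n => -[->].
rewrite card_in_imset // => -[F e] [F' e'] /=.
rewrite !inE /= => /andP [_ eF] /andP [_ e'F'] [eFF' ee']; subst e'.
by rewrite -(setD1K eF) -(setD1K e'F') eFF'.
Qed.

Lemma nforests_formula i : nforests i = 'C(#|V|.-1, i) * #|V| ^ i.
Proof.
elim: i => [|i IH]; first by rewrite nforests0 bin0.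
apply/eqP; rewrite -(eqn_pmul2r (ltn0Sn i)) nforests_rec IH; apply/eqP.
rewrite subnAC subn1 expnS.
transitivity (#|V| * #|V| ^ i * ((#|V|.-1 - i) * 'C(#|V|.-1, i))); first ring.
rewrite -mul_bin_left; ring.
Qed.

End DirectedForests.

Lemma bin_sub_mul_bin m k i : i <= k -> k <= m ->
  'C(m - i, m - k) * 'C(m, i) = 'C(m, k) * 'C(k, i).
Proof.
move=> le_ik le_km; have le_im := leq_trans le_ik le_km.
have mk_eq : m - k = (m - i) - (k - i) by rewrite subnBA // subnK.
apply/eqP; rewrite -(eqn_pmul2r (fact_gt0 (m - k))) -(eqn_pmul2r (fact_gt0 (k - i))).
rewrite -(eqn_pmul2r (fact_gt0 i)); apply/eqP.
have fact_mi : 'C(m - i, m - k) * ((k - i)`! * (m - k)`!) = (m - i)`!.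
  by rewrite {1}mk_eq bin_sub ?leq_sub2r // mk_eq bin_fact ?leq_sub2r.
transitivity ('C(m, i) * (i`! * (m - i)`!)); first by rewrite -fact_mi; ring.
transitivity ('C(m, k) * ('C(k, i) * (i`! * (k - i)`!) * (m - k)`!)); last by ring.
by rewrite !bin_fact.
Qed.

Lemma dim1_eq (T : finType) (K : {set {set T}}) m :
  (forall i, (0 < fcount K i) = (i <= m)) -> dim1 K = m.
Proof.
move=> fK; apply/eqP; rewrite eqn_leq; apply/andP; split.
  apply/bigmax_leqP => F KF; rewrite -fK; apply/card_gt0P.
  by exists F; rewrite inE KF eqxx.
have /card_gt0P [F] : 0 < fcount K m by rewrite fK.
by rewrite inE => /andP [KF /eqP <-]; apply: leq_bigmax_cond.
Qed.

Lemma hvec_binomial_fcount (T : finType) (K : {set {set T}}) m k :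
  (forall i, fcount K i = 'C(m, i) * m.+1 ^ i) -> k <= m ->
  hvec K k = Posz ('C(m, k) * m ^ k).
Proof.
move=> fK le_km; rewrite /hvec.
have -> : dim1 K = m by apply: dim1_eq => i; rewrite fK muln_gt0 bin_gt0 expn_gt0 andbT.
have PoszX a b : Posz (a ^ b) = (Posz a ^+ b)%R by rewrite -!natz natrX.
have m_eq : Posz m = (-1 + Posz m.+1)%R by rewrite -addn1 PoszD; ring.
rewrite big_mkord PoszM PoszX m_eq exprDn mulr_sumr; apply: eq_bigr => i _.
have le_ik : i <= k by rewrite -ltnS.
have := congr1 Posz (bin_sub_mul_bin le_ik le_km); rewrite !PoszM => tri.
rewrite fK -mulr_natr natz PoszM PoszX.
transitivity ((-1) ^+ (k - i) * (Posz 'C(m - i, m - k) * Posz 'C(m, i)) * Posz m.+1 ^+ i)%R.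
  by ring.
by rewrite tri; ring.
Qed.

Lemma is_face_complete n (F : {set 'I_n * 'I_n}) :
  is_face (@complete_adj n) F = directed_forest F.
Proof.
rewrite /is_face andb_idl // => hF; apply/forall_inP => -[x y] xyF.
by apply: contraTneq (forest_acyclic hF xyF) => /= <-; rewrite connect0.
Qed.

Lemma fcount_faces_complete n i :
  fcount (faces_of (@complete_adj n)) i = nforests 'I_n i.
Proof. by apply: eq_card => F; rewrite !inE is_face_complete. Qed.

Theorem mainTheorem1 (n : nat) (hn : 1 <= n) (k : nat) (hk : k <= n - 1) :
  hvec (faces_of (@complete_adj n)) k = (Posz ('C(n - 1, k) * (n - 1) ^ k)).
Proof.
apply: hvec_binomial_fcount hk => i.
by rewrite fcount_faces_complete nforests_formula card_ord subn1 prednK.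
Qed.
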